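(* Let $(a_{ij})_{i,j=1}^s$, $(b_i)_{i=1}^s$ be the coefficients of an $s$-stage Runge–Kutta scheme with all $b_i\neq 0$, and set $c_i=\sum_{j}a_{ij}$, $d_j=\sum_i b_i a_{ij}$. Assume the simplifying assumption $D(1)$ holds, i.e. $d_j=b_j(1-c_j)$ for all $j=1,\dots,s$. (i) If the scheme satisfies the classical order conditions up to order three, then it satisfies the additional order-three condition $\sum_i \frac{d_i^2}{b_i}=\frac13$. (ii) If the scheme satisfies the classical order conditions up to order four, then it satisfies, in addition, the additional order-four conditions $$\sum_i c_i\frac{d_i^2}{b_i}=\frac1{12},\quad \sum_i\frac{d_i^3}{b_i^2}=\frac14,\quad \sum_{i,j}\frac{b_i}{b_j}c_i a_{ij}d_j=\frac5{24},\quad \sum_{i,j}\frac{d_i}{b_j}a_{ij}d_j=\frac18.$$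
   Context: All sums run from $1$ to $s$. The classical order conditions (for an ODE $y'=f(y)$) up to order four are: $\sum b_i=1$; $\sum d_i=\frac12$; $\sum c_id_i=\frac16$, $\sum b_ic_i^2=\frac13$; $\sum b_ic_i^3=\frac14$, $\sum b_ic_ia_{ij}c_j=\frac18$, $\sum d_ic_i^2=\frac1{12}$, $\sum d_ia_{ij}c_j=\frac1{24}$. The ''additional order conditions'' are the extra conditions (due to Hager and Bonnans–Laurent-Varin) needed so that the Runge–Kutta discretization of an optimal control problem, in which the state is discretized with $(a_{ij},b_i)$ and the adjoint state with the scheme $\hat b_i=b_i$, $\hat a_{ij}=b_j-\frac{b_j}{b_i}a_{ji}$ (so that discretization and optimization commute), attains the corresponding order. *)

(* Coefficients live in an arbitrary real field R
   (covers the reals; generalizes faithfully since all statements are algebraic). *)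
From HB Require Import structures.
From mathcomp Require Import all_boot all_order all_algebra.
Set Implicit Arguments. Unset Strict Implicit. Unset Printing Implicit Defensive.
Import Order.TTheory GRing.Theory Num.Theory.
Local Open Scope ring_scope.

Definition rk_c (R : realFieldType) (s : nat) (a : 'I_s -> 'I_s -> R) (i : 'I_s) : R :=
  \sum_(j < s) a i j.
Definition rk_d (R : realFieldType) (s : nat) (a : 'I_s -> 'I_s -> R) (b : 'I_s -> R)
  (j : 'I_s) : R := \sum_(i < s) b i * a i j.

Definition D1 (R : realFieldType) (s : nat) (a : 'I_s -> 'I_s -> R) (b : 'I_s -> R) : Prop :=
  forall j : 'I_s, rk_d a b j = b j * (1 - rk_c a j).

Definition classical_order3 (R : realFieldType) (s : nat) (a : 'I_s -> 'I_s -> R)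
  (b : 'I_s -> R) : Prop :=
  [/\ \sum_(i < s) b i = 1,
      \sum_(i < s) rk_d a b i = 2^-1,
      \sum_(i < s) rk_c a i * rk_d a b i = 6^-1 &
      \sum_(i < s) b i * rk_c a i ^+ 2 = 3^-1].

Definition classical_order4 (R : realFieldType) (s : nat) (a : 'I_s -> 'I_s -> R)
  (b : 'I_s -> R) : Prop :=
  [/\ classical_order3 a b,
      \sum_(i < s) b i * rk_c a i ^+ 3 = 4^-1,
      \sum_(i < s) \sum_(j < s) b i * rk_c a i * a i j * rk_c a j = 8^-1,
      \sum_(i < s) rk_d a b i * rk_c a i ^+ 2 = 12^-1 &
      \sum_(i < s) \sum_(j < s) rk_d a b i * a i j * rk_c a j = 24^-1].

From HB Require Import structures.
From mathcomp Require Import all_boot all_order all_algebra.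
From mathcomp Require Import ring.
Set Implicit Arguments. Unset Strict Implicit.
Import Order.TTheory GRing.Theory Num.Theory.
Local Open Scope ring_scope.

(* The simplifying assumption D(1) says d_j = b_j (1 - c_j), so
   every quotient d_j^(k+1) / b_j^k collapses to b_j (1 - c_j)^(k+1), and the
   inner sum  sum_j a_ij d_j / b_j  collapses to  c_i - sum_j a_ij c_j.
   Hence, for ANY scheme satisfying D(1) with nonzero weights, each sum in the
   additional order conditions is a fixed linear combination of the sums that
   occur in the classical order conditions (the moments sum_i b_i c_i^k and
   the two tree sums sum b_i c_i a_ij c_j, sum d_i a_ij c_j).  These
   expansion identities are proved first, in a section over an arbitrary
   scheme; the only extra fact needed is sum_i b_i c_i = 1/2, which follows
   from sum_i d_i = sum_i b_i - sum_i b_i c_i. *)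

Section D1Expansions.

Variables (R : realFieldType) (s : nat) (a : 'I_s -> 'I_s -> R) (b : 'I_s -> R).
Hypothesis hD1 : D1 a b.
Hypothesis hb : forall i : 'I_s, b i != 0.

Local Notation c := (rk_c a).
Local Notation d := (rk_d a b).

Lemma sum_d_D1 : \sum_(i < s) d i = \sum_(i < s) b i - \sum_(i < s) b i * c i.
Proof.
rewrite -sumrB; apply: eq_bigr => i _; rewrite hD1; ring.
Qed.

Lemma D1_quotient (j : 'I_s) : d j / b j = 1 - c j.
Proof. by rewrite hD1 mulrC mulKf. Qed.

Lemma D1_inner_sum (i : 'I_s) :
  \sum_(j < s) a i j * (d j / b j) = c i - \sum_(j < s) a i j * c j.
Proof.
rewrite -sumrB; apply: eq_bigr => j _; rewrite D1_quotient; ring.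
Qed.

Lemma sum_d2_over_b :
  \sum_(i < s) d i ^+ 2 / b i
  = \sum_(i < s) b i - 2 * \sum_(i < s) b i * c i + \sum_(i < s) b i * c i ^+ 2.
Proof.
rewrite mulr_sumr -sumrB -big_split /=; apply: eq_bigr => i _.
by rewrite hD1; field; rewrite hb.
Qed.

Lemma sum_c_d2_over_b :
  \sum_(i < s) c i * (d i ^+ 2 / b i)
  = \sum_(i < s) b i * c i - 2 * \sum_(i < s) b i * c i ^+ 2
    + \sum_(i < s) b i * c i ^+ 3.
Proof.
rewrite mulr_sumr -sumrB -big_split /=; apply: eq_bigr => i _.
by rewrite hD1; field; rewrite hb.
Qed.

Lemma sum_d3_over_b2 :
  \sum_(i < s) d i ^+ 3 / b i ^+ 2
  = \sum_(i < s) b i - 3 * \sum_(i < s) b i * c i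
    + 3 * \sum_(i < s) b i * c i ^+ 2 - \sum_(i < s) b i * c i ^+ 3.
Proof.
rewrite !mulr_sumr -sumrB -big_split -sumrB /=; apply: eq_bigr => i _.
by rewrite hD1; field; rewrite hb.
Qed.

Lemma sum_bcad_over_b :
  \sum_(i < s) \sum_(j < s) b i / b j * c i * a i j * d j
  = \sum_(i < s) b i * c i ^+ 2
    - \sum_(i < s) \sum_(j < s) b i * c i * a i j * c j.
Proof.
rewrite -sumrB; apply: eq_bigr => i _.
transitivity (b i * c i * \sum_(j < s) a i j * (d j / b j)).
  by rewrite (mulr_sumr _ _ _ (b i * c i)); apply: eq_bigr => j _; ring.
rewrite D1_inner_sum mulrBr; congr (_ - _); first by rewrite expr2 mulrA.
by rewrite mulr_sumr; apply: eq_bigr => j _; ring.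
Qed.

Lemma sum_dad_over_b :
  \sum_(i < s) \sum_(j < s) d i / b j * a i j * d j
  = \sum_(i < s) c i * d i - \sum_(i < s) \sum_(j < s) d i * a i j * c j.
Proof.
rewrite -sumrB; apply: eq_bigr => i _.
transitivity (d i * \sum_(j < s) a i j * (d j / b j)).
  by rewrite (mulr_sumr _ _ _ (d i)); apply: eq_bigr => j _; ring.
rewrite D1_inner_sum mulrBr; congr (_ - _); first exact: mulrC.
by rewrite mulr_sumr; apply: eq_bigr => j _; ring.
Qed.

End D1Expansions.

(* Under D(1), the order-three conditions force the quadrature condition
   sum b c = 1/2 (which is not listed among them). *)
Lemma order3_sum_bc (R : realFieldType) (s : nat) (a : 'I_s -> 'I_s -> R)
    (b : 'I_s -> R) :
  D1 a b -> classical_order3 a b -> \sum_(i < s) b i * rk_c a i = 2^-1.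
Proof.
move=> hD1 [sum_b sum_d _ _]; move: sum_d.
rewrite (sum_d_D1 hD1) sum_b => /(congr1 (fun x => 1 - x)).
by rewrite opprB addrC subrK => ->; field.
Qed.

Theorem mainTheorem1 (R : realFieldType) (s : nat)
  (a : 'I_s -> 'I_s -> R) (b : 'I_s -> R)
  (hb : forall i : 'I_s, b i != 0)
  (hD1 : D1 a b) :
  (classical_order3 a b ->
     \sum_(i < s) rk_d a b i ^+ 2 / b i = 3^-1)
  /\
  (classical_order4 a b ->
     [/\ \sum_(i < s) rk_c a i * (rk_d a b i ^+ 2 / b i) = 12^-1,
         \sum_(i < s) rk_d a b i ^+ 3 / b i ^+ 2 = 4^-1,
         \sum_(i < s) \sum_(j < s) b i / b j * rk_c a i * a i j * rk_d a b j = 5 / 24 &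
         \sum_(i < s) \sum_(j < s) rk_d a b i / b j * a i j * rk_d a b j = 8^-1]).
Proof.
split=> [ord3 | [ord3 bc3 bcac dc2 dac]].
  have bc := order3_sum_bc hD1 ord3; case: ord3 => b1 _ _ bc2.
  by rewrite (sum_d2_over_b hD1 hb) b1 bc bc2; field.
have bc := order3_sum_bc hD1 ord3; case: ord3 => b1 _ cd bc2.
split.
- by rewrite (sum_c_d2_over_b hD1 hb) bc bc2 bc3; field.
- by rewrite (sum_d3_over_b2 hD1 hb) b1 bc bc2 bc3; field.
- by rewrite (sum_bcad_over_b hD1 hb) bc2 bcac; field.
- by rewrite (sum_dad_over_b hD1 hb) cd dac; field.
Qed.
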